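(* The set $S_0$ is semi-attracting, i.e. $r(x,y)\le r(y,x)$ for all $x\in S_0$ and $y\in S\setminus S_0$ with $r(x,y)+r(y,x)>0$.
   Context: $S$ is a finite set and $r:S\times S\to[0,\infty)$ with $r(x,x)=0$ are the jump rates of an irreducible continuous-time Markov chain on $S$. $Z_1$ is the continuous-time Markov chain on $S$ with jump rates $b(x,y)=[r(x,y)-r(y,x)]\mathbf 1\{r(x,y)>r(y,x)\}$, and $S_0$ denotes the set of recurrent states (including absorbing states) of $Z_1$. *)

From mathcomp Require Import all_boot all_order all_algebra.
Set Implicit Arguments. Unset Strict Implicit. Unset Printing Implicit Defensive.
Import Order.TTheory GRing.Theory Num.Theory.
Local Open Scope ring_scope.

Section Defs.
Variables (R : realFieldType) (S : finType).

Definition rate_rel (q : S -> S -> R) : rel S := fun x y => 0 < q x y.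

Definition irreducible (q : S -> S -> R) : Prop :=
  forall x y, connect (rate_rel q) x y.

(* recurrence of a state of a finite-state continuous-time chain:
   every state reachable from x leads back to x (x lies in a closed
   communicating class); absorbing states are recurrent. *)
Definition recurrent (q : S -> S -> R) (x : S) : bool :=
  [forall y, connect (rate_rel q) x y ==> connect (rate_rel q) y x].

(* jump rates of Z_1: b(x,y) = [r(x,y) - r(y,x)] 1{r(x,y) > r(y,x)} *)
Definition brate (r : S -> S -> R) (x y : S) : R :=
  if r y x < r x y then r x y - r y x else 0.

Definition S0 (r : S -> S -> R) : {set S} := [set x | recurrent (brate r) x].

End Defs.

From mathcomp Require Import all_boot all_order all_algebra.
Set Implicit Arguments. Unset Strict Implicit. Unset Printing Implicit Defensive.
Import Order.TTheory GRing.Theory Num.Theory.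
Local Open Scope ring_scope.

(* If r x y > r y x then Z_1 jumps from x to y. Recurrent states form closed
   classes, so a state reachable from a recurrent one is recurrent; hence
   x in S_0 forces y in S_0. *)

Lemma brate_gt0 (R : realFieldType) (S : finType) (r : S -> S -> R) (x y : S) :
  (0 < brate r x y) = (r y x < r x y).
Proof. by rewrite /brate; case: ifP; rewrite ?subr_gt0 ?ltxx. Qed.

Lemma recurrent_connect (R : realFieldType) (S : finType) (q : S -> S -> R)
    (x y : S) :
  recurrent q x -> connect (rate_rel q) x y -> recurrent q y.
Proof.
move=> /forallP rec_x cxy; apply/forallP => z; apply/implyP => cyz.
have czx := implyP (rec_x z) (connect_trans cxy cyz).
exact: connect_trans czx cxy.
Qed.

Theorem lemma4p5 (R : realFieldType) (S : finType) (r : S -> S -> R)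
  (r_ge0 : forall x y, 0 <= r x y) (r_diag : forall x, r x x = 0)
  (r_irr : irreducible r) :
  forall x y, x \in S0 r -> y \notin S0 r -> 0 < r x y + r y x ->
  r x y <= r y x.
Proof.
move=> x y; rewrite !inE => rec_x nrec_y _.
rewrite leNgt; apply: contra nrec_y => lt_yx_xy.
have edge_xy : rate_rel (brate r) x y by rewrite /rate_rel brate_gt0.
exact: recurrent_connect rec_x (connect1 edge_xy).
Qed.
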